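(* Let $k\ge2$, $n$ be integers, $c\ge0$, and let numbers $b_{\ell,r}$, for $k<\ell\le n+1$ and $r\in\{0,\dots,k\}$, satisfy $b_{n+1,r}=0$, $b_{\ell,0}=0$, and for $k<\ell\le n$, $r\ge1$: $$b_{\ell,r}=\sum_{j=\ell}^{n}\left(\frac{\ell-k}{j-k}\right)^k\left(\frac{k-1}{j+1}\,b_{j+1,r-1}+\frac{c}{n}\right).$$ Then for all $\ell$ with $k^2+k\le\ell\le n$ and all $r\in\{0,\dots,k\}$, $$b_{\ell,r}\ \ge\ \left(\frac{r(\ell-k)}{(k-1)n}-\frac{1}{k-1}\left(\frac{\ell-k}{n-k}\right)^k\sum_{r'=0}^{r-1}\sum_{i=0}^{r'}\frac{(k-1)^i}{i!}\ln^i\!\left(\frac{n}{\ell}\right)-\frac{3k^2r}{(k-1)n}\right)c.$$ *)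

From Stdlib Require Import Reals List Arith.
Open Scope R_scope.

(* sum_{j=a}^{b} f j  (empty when b < a) *)
Definition sum_ft (a b : nat) (f : nat -> R) : R :=
  fold_right Rplus 0 (map f (seq a (S b - a))).

Definition sum_lt (m : nat) (f : nat -> R) : R :=
  fold_right Rplus 0 (map f (seq 0 m)).

(* Write B(l, r) for the claimed bound divided by c and P_r(t) for the double
   sum, a sum of truncated exponentials of (k - 1) ln (n / t). The recursion together with the
   induction hypothesis at j + 1 bounds b_{l,r+1} below by c times a sum over l <= j < n of
   explicit terms T_j, plus the last summand ((l - k) / (n - k))^k / n. This sum is compared
   with the telescoping sum of a potential W: with x = j - k, W(j) - W(j+1) <= T_j follows from
   the discrete mean-value bounds for 1 / x^p on [x, x + 1], from
   ((x + 1) / x)^k <= 1 + k^2 / ((k - 1) x) for x >= k^2, and from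
   P_{r+1}(s) - P_{r+1}(t) >= (k - 1) (s - t) P_r(t) with s - t = ln ((j + 1) / j) >= 1 / (j + 1).
   Finally W(l) - W(n) dominates B(l, r + 1) up to the last summand; the term 3 k^2 r / ((k - 1) n)
   pays for the errors made along the way. *)

From Stdlib Require Import Reals List Arith Lra Lia.
Open Scope R_scope.

Definition sum_seq (a m : nat) (f : nat -> R) : R :=
  fold_right Rplus 0 (map f (seq a m)).

Lemma sum_seq_succ_l a m f : sum_seq a (S m) f = f a + sum_seq (S a) m f.
Proof. reflexivity. Qed.

Lemma sum_seq_succ_r a m f : sum_seq a (S m) f = sum_seq a m f + f (a + m)%nat.
Proof.
  revert a; induction m as [|m IH]; intro a.
  - cbn; rewrite Nat.add_0_r; ring.
  - rewrite sum_seq_succ_l, IH, sum_seq_succ_l, Nat.add_succ_comm; ring.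
Qed.

Lemma sum_seq_le a m f g :
  (forall i, (a <= i < a + m)%nat -> f i <= g i) -> sum_seq a m f <= sum_seq a m g.
Proof.
  revert a; induction m as [|m IH]; intros a H; [cbn; lra|].
  rewrite !sum_seq_succ_l; apply Rplus_le_compat; [apply H; lia|].
  apply IH; intros; apply H; lia.
Qed.

Lemma sum_seq_scal a m c f : sum_seq a m (fun i => c * f i) = c * sum_seq a m f.
Proof.
  revert a; induction m as [|m IH]; intro a; [cbn; ring|].
  rewrite !sum_seq_succ_l, IH; ring.
Qed.

Lemma sum_seq_telescope a m V :
  sum_seq a m (fun i => V i - V (S i)) = V a - V (a + m)%nat.
Proof.
  revert a; induction m as [|m IH]; intro a; [cbn; rewrite Nat.add_0_r; ring|].
  rewrite sum_seq_succ_l, IH, Nat.add_succ_comm; ring.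
Qed.

Lemma sum_ft_0_sum_f_R0 M f : sum_ft 0 M f = sum_f_R0 f M.
Proof.
  change (sum_seq 0 (S M - 0) f = sum_f_R0 f M); rewrite Nat.sub_0_r.
  induction M as [|M IH]; [cbn; ring|].
  rewrite sum_seq_succ_r, IH; reflexivity.
Qed.

Lemma Rdiv_nonneg x y : 0 <= x -> 0 < y -> 0 <= x / y.
Proof. intros Hx Hy; apply Rmult_le_pos; [exact Hx | apply Rlt_le, Rinv_0_lt_compat, Hy]. Qed.

Lemma Rle_of_sub_eq_div x y a d : 0 <= a -> 0 < d -> y - x = a / d -> x <= y.
Proof. intros Ha Hd E; pose proof (Rdiv_nonneg a d Ha Hd); lra. Qed.

Lemma pow_div x y m : (x / y) ^ m = x ^ m / y ^ m.
Proof. unfold Rdiv; rewrite Rpow_mult_distr, pow_inv; reflexivity. Qed.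

Lemma bernoulli_ineq t m : -1 <= t -> 1 + INR m * t <= (1 + t) ^ m.
Proof.
  intro Ht; induction m as [|m IH]; [cbn; lra|].
  rewrite S_INR; cbn [pow].
  assert (0 <= INR m) by apply pos_INR; nra.
Qed.

Lemma pow_succ_sub_ge s t m :
  0 <= t <= s -> INR (S m) * t ^ m * (s - t) <= s ^ S m - t ^ S m.
Proof.
  intro Hts; induction m as [|m IH]; [cbn; lra|].
  cbn [pow] in *; rewrite !S_INR in *.
  assert (0 <= t ^ m) by (apply pow_le; lra).
  assert (0 <= INR m) by apply pos_INR.
  set (L := (INR m + 1) * t ^ m * (s - t)) in IH.
  assert (0 <= L) by (apply Rmult_le_pos; [apply Rmult_le_pos|]; lra).
  assert (s * L <= s * (s * s ^ m - t * t ^ m)) by (apply Rmult_le_compat_l; lra).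
  assert (t * L <= s * L) by (apply Rmult_le_compat_r; lra).
  unfold L in *; lra.
Qed.

Lemma exp_partial_sum_le y M :
  0 <= y -> sum_f_R0 (fun i => / INR (fact i) * y ^ i) M <= exp y.
Proof.
  intro Hy; unfold exp; destruct (exist_exp y) as [l Hl]; cbn.
  apply growing_ineq; [|exact Hl].
  intro m; cbn [sum_f_R0].
  assert (0 <= / INR (fact (S m)) * y ^ S m).
  { apply Rmult_le_pos; [apply Rlt_le, Rinv_0_lt_compat, INR_fact_lt_0 | apply pow_le; lra]. }
  lra.
Qed.

Definition taylor_exp (a t : R) (M : nat) : R :=
  sum_ft 0 M (fun i => a ^ i / INR (fact i) * t ^ i).

Definition taylor_exp_sum (a t : R) (r : nat) : R := sum_lt r (taylor_exp a t).

Lemma taylor_exp_0 a t : taylor_exp a t 0 = 1.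
Proof. unfold taylor_exp; rewrite sum_ft_0_sum_f_R0; cbn; field. Qed.

Lemma taylor_exp_succ a t M :
  taylor_exp a t (S M) = taylor_exp a t M + a ^ S M / INR (fact (S M)) * t ^ S M.
Proof. unfold taylor_exp; rewrite !sum_ft_0_sum_f_R0; reflexivity. Qed.

Lemma taylor_exp_at_0 a M : taylor_exp a 0 M = 1.
Proof.
  induction M as [|M IH]; [apply taylor_exp_0|].
  rewrite taylor_exp_succ, IH, pow_i by lia; ring.
Qed.

Lemma taylor_exp_le_exp a t M : 0 <= a -> 0 <= t -> taylor_exp a t M <= exp (a * t).
Proof.
  intros Ha Ht; unfold taylor_exp; rewrite sum_ft_0_sum_f_R0.
  replace (sum_f_R0 _ M) with (sum_f_R0 (fun i => / INR (fact i) * (a * t) ^ i) M).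
  - apply exp_partial_sum_le, Rmult_le_pos; lra.
  - apply sum_eq; intros i _; rewrite Rpow_mult_distr; unfold Rdiv; ring.
Qed.

(* The derivative of [taylor_exp a _ (S M)] is [a * taylor_exp a _ M], which is nondecreasing. *)
Lemma taylor_exp_succ_sub_ge a s t M :
  0 <= a -> 0 <= t <= s ->
  a * (s - t) * taylor_exp a t M <= taylor_exp a s (S M) - taylor_exp a t (S M).
Proof.
  intros Ha Hts; induction M as [|M IH].
  - rewrite !taylor_exp_succ, !taylor_exp_0; cbn; field_simplify; lra.
  - rewrite (taylor_exp_succ a s (S M)), (taylor_exp_succ a t (S M)), (taylor_exp_succ a t M).
    rewrite (taylor_exp_succ a t M) in IH.
    pose proof (pow_succ_sub_ge s t (S M) Hts) as Hpow.
    rewrite (fact_simpl (S M)), mult_INR.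
    assert (HF : 0 < INR (fact (S M))) by apply INR_fact_lt_0.
    assert (HN : 0 < INR (S (S M))) by (apply lt_0_INR; lia).
    set (F := INR (fact (S M))) in *; set (N := INR (S (S M))) in *.
    set (w := a * (a ^ S M / F) / N).
    assert (Hw : 0 <= w).
    { unfold w, Rdiv; repeat apply Rmult_le_pos; try apply pow_le; try lra;
        apply Rlt_le, Rinv_0_lt_compat; lra. }
    assert (w * (N * t ^ S M * (s - t)) <= w * (s ^ S (S M) - t ^ S (S M))).
    { apply Rmult_le_compat_l; [lra|exact Hpow]. }
    assert (E1 : a ^ S (S M) / (N * F) * s ^ S (S M) - a ^ S (S M) / (N * F) * t ^ S (S M)
                 = w * (s ^ S (S M) - t ^ S (S M))) by (unfold w; cbn [pow]; field; lra).
    assert (E2 : a * (s - t) * (a ^ S M / F * t ^ S M) = w * (N * t ^ S M * (s - t)))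
      by (unfold w; field; lra).
    lra.
Qed.

Lemma taylor_exp_ge0 a t M : 0 <= a -> 0 <= t -> 0 <= taylor_exp a t M.
Proof.
  intros Ha Ht; induction M as [|M IH]; [rewrite taylor_exp_0; lra|].
  rewrite taylor_exp_succ.
  assert (0 <= a ^ S M / INR (fact (S M)) * t ^ S M).
  { apply Rmult_le_pos; [apply Rmult_le_pos|]; try (apply pow_le; lra).
    apply Rlt_le, Rinv_0_lt_compat, INR_fact_lt_0. }
  lra.
Qed.

Lemma taylor_exp_sum_succ a t r :
  taylor_exp_sum a t (S r) = taylor_exp_sum a t r + taylor_exp a t r.
Proof. exact (sum_seq_succ_r 0 r (taylor_exp a t)). Qed.

Lemma taylor_exp_sum_ge0 a t r : 0 <= a -> 0 <= t -> 0 <= taylor_exp_sum a t r.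
Proof.
  intros Ha Ht; induction r as [|r IH]; [cbn; lra|].
  rewrite taylor_exp_sum_succ; pose proof (taylor_exp_ge0 a t r Ha Ht); lra.
Qed.

Lemma taylor_exp_sum_at_0 a r : taylor_exp_sum a 0 r = INR r.
Proof.
  induction r as [|r IH]; [reflexivity|].
  rewrite taylor_exp_sum_succ, IH, taylor_exp_at_0, S_INR; ring.
Qed.

Lemma ln_ge_0 y : 1 <= y -> 0 <= ln y.
Proof.
  intro Hy; destruct (Rle_lt_or_eq_dec 1 y Hy) as [Hlt | <-]; [|rewrite ln_1; lra].
  rewrite <- ln_1; apply Rlt_le, ln_increasing; lra.
Qed.

Lemma taylor_exp_sum_le_pow p y r :
  1 <= y -> taylor_exp_sum (INR p) (ln y) r <= INR r * y ^ p.
Proof.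
  intro Hy; pose proof (ln_ge_0 y Hy) as Hln.
  rewrite <- Rpower_pow by lra; unfold Rpower.
  induction r as [|r IH]; [cbn; lra|].
  rewrite taylor_exp_sum_succ, S_INR.
  pose proof (taylor_exp_le_exp (INR p) (ln y) r (pos_INR p) Hln); lra.
Qed.

Lemma taylor_exp_sum_succ_sub_ge a s t q :
  0 <= a -> 0 <= t <= s ->
  a * (s - t) * taylor_exp_sum a t q
  <= taylor_exp_sum a s (S q) - taylor_exp_sum a t (S q).
Proof.
  intros Ha Hts; induction q as [|q IH].
  - rewrite !taylor_exp_sum_succ, !taylor_exp_0; cbn; lra.
  - rewrite (taylor_exp_sum_succ a s (S q)), (taylor_exp_sum_succ a t (S q)),
      (taylor_exp_sum_succ a t q).
    rewrite (taylor_exp_sum_succ a t q) in IH.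
    pose proof (taylor_exp_succ_sub_ge a s t q Ha Hts); lra.
Qed.

Lemma ln_div_sub_ln_div_succ_ge x y :
  0 < x -> 0 < y -> 1 / (x + 1) <= ln (y / x) - ln (y / (x + 1)).
Proof.
  intros Hx Hy.
  replace (ln (y / x) - ln (y / (x + 1))) with (ln ((x + 1) / x)).
  2:{ unfold Rdiv; rewrite !ln_mult, !ln_Rinv; try apply Rinv_0_lt_compat; lra. }
  pose proof (exp_ineq1_le (ln (x / (x + 1)))) as H.
  rewrite exp_ln in H by (apply Rdiv_lt_0_compat; lra).
  replace (ln (x / (x + 1))) with (- ln ((x + 1) / x)) in H.
  2:{ rewrite <- ln_Rinv by (apply Rdiv_lt_0_compat; lra); f_equal; field; lra. }
  replace (x / (x + 1)) with (1 - 1 / (x + 1)) in H by (field; lra).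
  lra.
Qed.

Lemma sub_mul_succ_pow_le x p : 0 <= x -> (x - INR p) * (x + 1) ^ p <= x ^ S p.
Proof.
  intro Hx; induction p as [|p IH]; [cbn; lra|].
  rewrite S_INR; cbn [pow] in *.
  assert (x * x ^ p <= (x + 1) * (x + 1) ^ p) by (apply (pow_incr x (x + 1) (S p)); lra).
  nra.
Qed.

Lemma pred_pow_mul_add_le y m : 1 <= y -> (y - 1) ^ m * (y + INR m) <= y ^ S m.
Proof.
  intro Hy; induction m as [|m IH]; [cbn; lra|].
  rewrite S_INR; cbn [pow] in *.
  assert ((y - 1) * (y - 1) ^ m <= y * y ^ m) by (apply (pow_incr (y - 1) y (S m)); lra).
  assert (0 <= (y - 1) ^ m) by (apply pow_le; lra).
  nra.
Qed.

Lemma inv_pow_sub_succ_le x p :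
  0 < x -> (1 <= p)%nat -> (1 / x ^ p - 1 / (x + 1) ^ p) / INR p <= 1 / x ^ S p.
Proof.
  intros Hx Hp.
  assert (0 < x ^ p) by (apply pow_lt; lra).
  assert (0 < (x + 1) ^ p) by (apply pow_lt; lra).
  assert (0 < INR p) by (apply lt_0_INR; lia).
  pose proof (sub_mul_succ_pow_le x p ltac:(lra)) as Hshift; cbn [pow] in *.
  apply Rle_of_sub_eq_div with (a := x * x ^ p - (x - INR p) * (x + 1) ^ p)
    (d := x * x ^ p * (x + 1) ^ p * INR p); [lra | repeat apply Rmult_lt_0_compat; lra |].
  field; repeat split; lra.
Qed.

Lemma inv_pow_mul_succ_le x k :
  0 < x -> (2 <= k)%nat -> INR k * (INR k - 1) <= x + 1 ->
  1 / (x ^ k * (x + 1)) <= (1 / x ^ k - 1 / (x + 1) ^ k) / (INR k - 1).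
Proof.
  intros Hx Hk Hxk.
  assert (0 < x ^ k) by (apply pow_lt; lra).
  assert (0 < (x + 1) ^ k) by (apply pow_lt; lra).
  assert (HK : 2 <= INR k) by (apply (le_INR 2) in Hk; cbn in Hk; lra).
  pose proof (pred_pow_mul_add_le (x + 1) k ltac:(lra)) as W.
  replace (x + 1 - 1) with x in W by ring; cbn [pow] in W.
  assert (G : (x + 1) * x ^ k <= (x + 2 - INR k) * (x + 1) ^ k).
  { apply Rmult_le_reg_r with (x + 1 + INR k); [lra|].
    assert ((x + 1) * (x + 1) <= (x + 2 - INR k) * (x + 1 + INR k)) by nra.
    nra. }
  apply Rle_of_sub_eq_div with (a := (x + 2 - INR k) * (x + 1) ^ k - (x + 1) * x ^ k)
    (d := x ^ k * (x + 1) ^ k * (x + 1) * (INR k - 1)); [lra | repeat apply Rmult_lt_0_compat; lra |].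
  field; repeat split; lra.
Qed.

Lemma pow_mul_succ_le x k : 0 < x -> (1 <= k)%nat -> x ^ k * (x + 1) <= x * (x + 1) ^ k.
Proof.
  intros Hx Hk; destruct k as [|k]; [lia|]; cbn [pow].
  assert (x ^ k <= (x + 1) ^ k) by (apply pow_incr; lra).
  assert (0 <= x ^ k) by (apply pow_le; lra).
  nra.
Qed.

(* From [(1 + a) ^ k (1 - a) ^ k <= 1] and Bernoulli's inequality for [(1 - a) ^ k], with [a = 1 / x]. *)
Lemma succ_div_pow_le x k :
  (2 <= k)%nat -> INR k ^ 2 <= x -> ((x + 1) / x) ^ k <= 1 + INR k ^ 2 / ((INR k - 1) * x).
Proof.
  intros Hk Hx.
  assert (HK : 2 <= INR k) by (apply (le_INR 2) in Hk; cbn in Hk; lra).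
  assert (Hx4 : 4 <= x) by nra.
  set (a := 1 / x).
  assert (Ha : 0 < a) by (unfold a; apply Rdiv_lt_0_compat; lra).
  assert (Hax : a * x = 1) by (unfold a; field; lra).
  replace ((x + 1) / x) with (1 + a) by (unfold a; field; lra).
  replace (INR k ^ 2 / ((INR k - 1) * x)) with (INR k ^ 2 * a / (INR k - 1)) by (unfold a; field; lra).
  assert (Hka : INR k * a * INR k <= 1).
  { apply Rmult_le_reg_r with x; [lra|].
    replace (INR k * a * INR k * x) with (INR k ^ 2 * (a * x)) by ring; rewrite Hax; lra. }
  assert (E1 : (1 + a) ^ k * (1 - a) ^ k <= 1).
  { rewrite <- Rpow_mult_distr; apply Rle_trans with (1 ^ k); [|rewrite pow1; lra].
    apply pow_incr; split; nra. }
  assert (E2 : 1 + INR k * (- a) <= (1 - a) ^ k) by (apply bernoulli_ineq; nra).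
  assert (HB : 0 < (1 + a) ^ k) by (apply pow_lt; lra).
  set (B := (1 + a) ^ k) in *; set (e := INR k ^ 2 * a / (INR k - 1)).
  assert (He : e * (INR k - 1) = INR k ^ 2 * a) by (unfold e; field; lra).
  assert (He0 : 0 <= e) by (unfold e; apply Rmult_le_pos; [nra | apply Rlt_le, Rinv_0_lt_compat; lra]).
  assert (H1 : B * (1 - INR k * a) <= 1) by nra.
  assert (H2 : 1 <= (1 - INR k * a) * (1 + e)).
  { apply Rmult_le_reg_r with (INR k - 1); [lra|].
    replace ((1 - INR k * a) * (1 + e) * (INR k - 1))
      with ((1 - INR k * a) * (INR k - 1) + (1 - INR k * a) * (e * (INR k - 1))) by ring.
    rewrite He.
    assert (0 <= INR k * a * (1 - INR k * a * INR k)) by (apply Rmult_le_pos; nra).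
    nra. }
  apply Rmult_le_reg_r with (1 - INR k * a); nra.
Qed.

Section Bound.

Variables (k n : nat).
Hypothesis hk : (2 <= k)%nat.

Definition ln_taylor_sum (t : R) (r : nat) : R :=
  taylor_exp_sum (INR k - 1) (ln (INR n / t)) r.

Definition bound (l r : nat) : R :=
  INR r * (INR l - INR k) / ((INR k - 1) * INR n)
  - 1 / (INR k - 1) * ((INR l - INR k) / (INR n - INR k)) ^ k * ln_taylor_sum (INR l) r
  - 3 * INR k ^ 2 * INR r / ((INR k - 1) * INR n).

(* The [j]-th summand of the recursion for [b l (S q)], with [b (S j) q] replaced by
   [bound (S j) q * c], divided by [c]. *)
Definition bound_term (l q j : nat) : R :=
  ((INR l - INR k) / (INR j - INR k)) ^ k
  * ((INR k - 1) / (INR j + 1) * bound (S j) q + 1 / INR n).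

Lemma INR_k_ge_2 : 2 <= INR k.
Proof. apply (le_INR 2) in hk; cbn in hk; lra. Qed.

Lemma pow_k_pred x : x ^ k = x * x ^ (k - 1).
Proof. rewrite tech_pow_Rmult; f_equal; lia. Qed.

Lemma INR_k_pred : INR (k - 1) = INR k - 1.
Proof. rewrite minus_INR by lia; reflexivity. Qed.

Lemma bound_0 l : bound l 0 = 0.
Proof. unfold bound, ln_taylor_sum, taylor_exp_sum, Rdiv; cbn; ring. Qed.

Lemma ln_taylor_sum_ge0 t r : 0 < t <= INR n -> 0 <= ln_taylor_sum t r.
Proof.
  intro Ht; pose proof INR_k_ge_2.
  apply taylor_exp_sum_ge0; [lra|].
  apply ln_ge_0, Rle_of_sub_eq_div with (a := INR n - t) (d := t); [lra | lra | field; lra].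
Qed.

Lemma ln_taylor_sum_le_pow t r :
  0 < t <= INR n -> ln_taylor_sum t r <= INR r * (INR n / t) ^ (k - 1).
Proof.
  intro Ht; unfold ln_taylor_sum; rewrite <- INR_k_pred.
  apply taylor_exp_sum_le_pow, Rle_of_sub_eq_div with (a := INR n - t) (d := t);
    [lra | lra | field; lra].
Qed.

Lemma ln_taylor_sum_sub_succ_ge t q :
  0 < t -> t + 1 <= INR n ->
  ln_taylor_sum (t + 1) q / (t + 1)
  <= (ln_taylor_sum t (S q) - ln_taylor_sum (t + 1) (S q)) / (INR k - 1).
Proof.
  intros Ht Htn; pose proof INR_k_ge_2.
  pose proof (ln_div_sub_ln_div_succ_ge t (INR n) Ht ltac:(lra)) as Hln.
  assert (Hratio : 1 <= INR n / (t + 1))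
    by (apply Rle_of_sub_eq_div with (a := INR n - (t + 1)) (d := t + 1); [lra | lra | field; lra]).
  pose proof (ln_ge_0 _ Hratio).
  assert (0 < 1 / (t + 1)) by (apply Rdiv_lt_0_compat; lra).
  pose proof (taylor_exp_sum_succ_sub_ge (INR k - 1) (ln (INR n / t)) (ln (INR n / (t + 1))) q
                ltac:(lra) ltac:(lra)) as Hincr.
  fold (ln_taylor_sum t (S q)) (ln_taylor_sum (t + 1) (S q)) (ln_taylor_sum (t + 1) q) in Hincr.
  pose proof (ln_taylor_sum_ge0 (t + 1) q ltac:(lra)).
  set (L := ln_taylor_sum (t + 1) q) in *.
  set (dl := ln (INR n / t) - ln (INR n / (t + 1))) in *.
  apply Rmult_le_reg_l with (INR k - 1); [lra|].
  unfold Rdiv at 2; rewrite <- Rmult_assoc, Rinv_r_simpl_m by lra.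
  eapply Rle_trans; [|exact Hincr].
  replace ((INR k - 1) * (L / (t + 1))) with ((INR k - 1) * L * (1 / (t + 1))) by (field; lra).
  replace ((INR k - 1) * dl * L) with ((INR k - 1) * L * dl) by ring.
  apply Rmult_le_compat_l; [apply Rmult_le_pos; lra | exact Hln].
Qed.

(* The polynomial growth [ln_taylor_sum t q <= q (n / t) ^ (k - 1)] turns the correction
   term of [succ_div_pow_le] into a multiple of the decrement of [1 / x ^ k]. *)
Lemma ln_taylor_sum_correction_le q j :
  (k * k + k <= j)%nat -> (j < n)%nat ->
  let x := INR j - INR k in
  INR k ^ 2 / ((INR k - 1) * x) * (ln_taylor_sum (INR j + 1) q / (INR j + 1))
  <= INR k ^ 2 * INR q * (INR n - INR k) ^ (k - 1) / (INR k - 1)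
     * ((1 / x ^ k - 1 / (x + 1) ^ k) / (INR k - 1)).
Proof.
  intros Hj Hjn x.
  pose proof INR_k_ge_2 as HK.
  apply le_INR in Hj; rewrite plus_INR, mult_INR in Hj.
  apply le_INR in Hjn; rewrite S_INR in Hjn.
  pose proof (pos_INR q).
  assert (Hkj : INR k < INR j) by nra.
  assert (Hx : 0 < x) by (unfold x; lra).
  set (K1 := INR k - 1); set (D := INR n - INR k).
  set (Pq := ln_taylor_sum (INR j + 1) q).
  set (c3 := INR k ^ 2 * INR q * D ^ (k - 1) / K1).
  assert (HD : 0 < D) by (unfold D, x in *; lra).
  assert (HPq : 0 <= Pq) by (apply ln_taylor_sum_ge0; lra).
  assert (Hpow : Pq <= INR q * (D / (x + 1)) ^ (k - 1)).
  { eapply Rle_trans; [apply ln_taylor_sum_le_pow; lra|].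
    apply Rmult_le_compat_l; [apply pos_INR|].
    apply pow_incr; split; [apply Rdiv_nonneg; lra|].
    apply Rle_of_sub_eq_div with (a := INR k * (INR n - INR j - 1)) (d := (INR j + 1) * (x + 1)).
    - apply Rmult_le_pos; lra.
    - apply Rmult_lt_0_compat; lra.
    - unfold D, x in *; field; split; lra. }
  assert (Hinv : 1 / (x * (x + 1) ^ k) <= (1 / x ^ k - 1 / (x + 1) ^ k) / K1).
  { apply Rle_trans with (1 / (x ^ k * (x + 1))).
    - assert (0 < x ^ k) by (apply pow_lt; lra).
      unfold Rdiv; rewrite !Rmult_1_l; apply Rinv_le_contravar; [nra|].
      apply pow_mul_succ_le; [lra | lia].
    - apply inv_pow_mul_succ_le; [lra | exact hk | unfold x; nra]. }
  apply Rle_trans with (c3 * (1 / (x * (x + 1) ^ k))).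
  2:{ apply Rmult_le_compat_l; [|exact Hinv].
      apply Rdiv_nonneg; [apply Rmult_le_pos; [nra | apply pow_le; lra] | unfold K1; lra]. }
  replace (c3 * (1 / (x * (x + 1) ^ k)))
    with (INR k ^ 2 / (K1 * x) * (INR q * (D / (x + 1)) ^ (k - 1) * (1 / (x + 1)))).
  2:{ assert (0 < (x + 1) ^ (k - 1)) by (apply pow_lt; lra).
      unfold c3; rewrite pow_div, (pow_k_pred (x + 1)); field; unfold K1; repeat split; lra. }
  apply Rmult_le_compat_l; [apply Rdiv_nonneg; [nra | apply Rmult_lt_0_compat; unfold K1; lra]|].
  unfold Rdiv at 1; apply Rmult_le_compat; [exact HPq | apply Rlt_le, Rinv_0_lt_compat; lra | exact Hpow |].
  unfold Rdiv; rewrite Rmult_1_l; apply Rinv_le_contravar; unfold x in *; lra.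
Qed.

Lemma ln_taylor_sum_term_le q j :
  (k * k + k <= j)%nat -> (j < n)%nat ->
  let x := INR j - INR k in
  ((x + 1) / x) ^ k * (ln_taylor_sum (INR j + 1) q / (INR j + 1))
  <= (ln_taylor_sum (INR j) (S q) - ln_taylor_sum (INR j + 1) (S q)) / (INR k - 1)
     + INR k ^ 2 * INR q * (INR n - INR k) ^ (k - 1) / (INR k - 1)
       * ((1 / x ^ k - 1 / (x + 1) ^ k) / (INR k - 1)).
Proof.
  intros Hj Hjn x.
  pose proof (ln_taylor_sum_correction_le q j Hj Hjn) as Hcorr.
  pose proof INR_k_ge_2 as HK.
  apply le_INR in Hj; rewrite plus_INR, mult_INR in Hj.
  apply le_INR in Hjn; rewrite S_INR in Hjn.
  assert (Hx : INR k ^ 2 <= x) by (unfold x; nra).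
  pose proof (ln_taylor_sum_sub_succ_ge (INR j) q ltac:(nra) Hjn) as Hlog.
  pose proof (ln_taylor_sum_ge0 (INR j + 1) q ltac:(nra)).
  apply Rle_trans
    with ((1 + INR k ^ 2 / ((INR k - 1) * x)) * (ln_taylor_sum (INR j + 1) q / (INR j + 1))).
  - apply Rmult_le_compat_r; [apply Rdiv_nonneg; nra|].
    apply succ_div_pow_le; [exact hk | exact Hx].
  - rewrite Rmult_plus_distr_r, Rmult_1_l; apply Rplus_le_compat; assumption.
Qed.

Lemma bound_term_eq l q j :
  INR k < INR j -> INR j < INR n ->
  let x := INR j - INR k in
  bound_term l q j
  = (INR l - INR k) ^ k * ((INR q + 1) / INR n * (1 / x ^ k)
       - (INR q * INR k + 3 * INR k ^ 2 * INR q) / INR n * (1 / (x ^ k * (INR j + 1))))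
    - ((INR l - INR k) / (INR n - INR k)) ^ k
      * (((x + 1) / x) ^ k * (ln_taylor_sum (INR j + 1) q / (INR j + 1))).
Proof.
  intros Hkj Hjn x.
  pose proof INR_k_ge_2.
  assert (0 < x ^ (k - 1)) by (apply pow_lt; unfold x; lra).
  assert (0 < (x + 1) ^ (k - 1)) by (apply pow_lt; unfold x; lra).
  assert (0 < (INR n - INR k) ^ (k - 1)) by (apply pow_lt; lra).
  unfold bound_term, bound; rewrite S_INR.
  replace (INR j + 1 - INR k) with (x + 1) by (unfold x; ring).
  fold x; rewrite !pow_div, !(pow_k_pred x), !(pow_k_pred (x + 1)), !(pow_k_pred (INR n - INR k)).
  unfold x in *; field; repeat split; lra.
Qed.

(* A telescoping majorant: comparing [potential_sub_succ_eq] with [bound_term_eq] summand by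
   summand, each part of a decrement is at most the corresponding part of [bound_term]; the
   [k ^ 2 q (n - k) ^ (k - 1)] term absorbs the error of [succ_div_pow_le]. *)
Definition potential (l q j : nat) : R :=
  (INR l - INR k) ^ k / (INR k - 1)
    * ((INR q + 1) / INR n / (INR j - INR k) ^ (k - 1)
       - (INR q * INR k + 3 * INR k ^ 2 * INR q) / INR n / (INR j - INR k) ^ k)
  - ((INR l - INR k) / (INR n - INR k)) ^ k / (INR k - 1)
    * (INR k ^ 2 * INR q * (INR n - INR k) ^ (k - 1) / (INR k - 1) / (INR j - INR k) ^ k
       + ln_taylor_sum (INR j) (S q)).

Lemma potential_sub_succ_eq l q j :
  INR k < INR j -> INR j < INR n ->
  let x := INR j - INR k in
  let dk := (1 / x ^ k - 1 / (x + 1) ^ k) / (INR k - 1) in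
  potential l q j - potential l q (S j)
  = (INR l - INR k) ^ k
      * ((INR q + 1) / INR n * ((1 / x ^ (k - 1) - 1 / (x + 1) ^ (k - 1)) / (INR k - 1))
         - (INR q * INR k + 3 * INR k ^ 2 * INR q) / INR n * dk)
    - ((INR l - INR k) / (INR n - INR k)) ^ k
      * ((ln_taylor_sum (INR j) (S q) - ln_taylor_sum (INR j + 1) (S q)) / (INR k - 1)
         + INR k ^ 2 * INR q * (INR n - INR k) ^ (k - 1) / (INR k - 1) * dk).
Proof.
  intros Hkj Hjn x dk.
  pose proof INR_k_ge_2.
  assert (0 < x ^ (k - 1)) by (apply pow_lt; unfold x; lra).
  assert (0 < (x + 1) ^ (k - 1)) by (apply pow_lt; unfold x; lra).
  assert (0 < x ^ k) by (apply pow_lt; unfold x; lra).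
  assert (0 < (x + 1) ^ k) by (apply pow_lt; unfold x; lra).
  unfold potential, dk; rewrite S_INR.
  replace (INR j + 1 - INR k) with (x + 1) by (unfold x; ring); fold x.
  field; unfold x in *; repeat split; lra.
Qed.

Lemma potential_sub_succ_le l q j :
  (k * k + k <= l <= j)%nat -> (j < n)%nat ->
  potential l q j - potential l q (S j) <= bound_term l q j.
Proof.
  intros Hlj Hjn.
  pose proof (ln_taylor_sum_term_le q j ltac:(lia) Hjn) as Htaylor; cbv zeta in Htaylor.
  pose proof INR_k_ge_2 as HK.
  assert (Hl : INR k * INR k + INR k <= INR l)
    by (rewrite <- mult_INR, <- plus_INR; apply le_INR; lia).
  assert (Hlj' : INR l <= INR j) by (apply le_INR; lia).
  apply le_INR in Hjn; rewrite S_INR in Hjn.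
  pose proof (pos_INR q).
  assert (Hkl : INR k + 4 <= INR l) by nra.
  set (X := INR l - INR k); set (x := INR j - INR k); set (D := INR n - INR k).
  set (K1 := INR k - 1); set (u := (X / D) ^ k).
  set (c1 := (INR q + 1) / INR n); set (c2 := (INR q * INR k + 3 * INR k ^ 2 * INR q) / INR n).
  set (c3 := INR k ^ 2 * INR q * D ^ (k - 1) / K1).
  set (Pq := ln_taylor_sum (INR j + 1) q).
  set (dk := (1 / x ^ k - 1 / (x + 1) ^ k) / K1).
  assert (Hx : 0 < x) by (unfold x; lra).
  assert (0 < x ^ k) by (apply pow_lt; lra).
  assert (Eterm : bound_term l q j
    = X ^ k * (c1 * (1 / x ^ k) - c2 * (1 / (x ^ k * (INR j + 1))))
      - u * (((x + 1) / x) ^ k * (Pq / (INR j + 1))))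
    by (apply bound_term_eq; lra).
  assert (Ediff : potential l q j - potential l q (S j)
    = X ^ k * (c1 * ((1 / x ^ (k - 1) - 1 / (x + 1) ^ (k - 1)) / K1) - c2 * dk)
      - u * ((ln_taylor_sum (INR j) (S q) - ln_taylor_sum (INR j + 1) (S q)) / K1 + c3 * dk))
    by (apply potential_sub_succ_eq; lra).
  assert (HA : (1 / x ^ (k - 1) - 1 / (x + 1) ^ (k - 1)) / K1 <= 1 / x ^ k).
  { pose proof (inv_pow_sub_succ_le x (k - 1) Hx ltac:(lia)) as Hmv.
    rewrite INR_k_pred in Hmv; replace (S (k - 1)) with k in Hmv by lia; exact Hmv. }
  assert (HB : 1 / (x ^ k * (INR j + 1)) <= dk).
  { apply Rle_trans with (1 / (x ^ k * (x + 1))).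
    - unfold Rdiv; rewrite !Rmult_1_l; apply Rinv_le_contravar; [nra|].
      apply Rmult_le_compat_l; [lra | unfold x; lra].
    - apply inv_pow_mul_succ_le; [lra | exact hk | unfold x; nra]. }
  assert (HC : ((x + 1) / x) ^ k * (Pq / (INR j + 1))
               <= (ln_taylor_sum (INR j) (S q) - ln_taylor_sum (INR j + 1) (S q)) / K1 + c3 * dk)
    by exact Htaylor.
  assert (HX : 0 <= X ^ k) by (apply pow_le; unfold X; lra).
  assert (Hc1 : 0 <= c1) by (apply Rdiv_nonneg; lra).
  assert (Hc2 : 0 <= c2) by (apply Rdiv_nonneg; nra).
  assert (Hu : 0 <= u) by (apply pow_le, Rdiv_nonneg; unfold X, D; lra).
  rewrite Eterm, Ediff.
  apply Rmult_le_compat_l with (r := c1) in HA; [|exact Hc1].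
  apply Rmult_le_compat_l with (r := c2) in HB; [|exact Hc2].
  apply Rmult_le_compat_l with (r := X ^ k) in HA; [|exact HX].
  apply Rmult_le_compat_l with (r := X ^ k) in HB; [|exact HX].
  apply Rmult_le_compat_l with (r := u) in HC; [|exact Hu].
  lra.
Qed.

(* The constant [3] in [bound] is what makes this slack nonnegative. *)
Lemma bound_slack_ge0 l q :
  (q < k)%nat -> (k * k + k <= l <= n)%nat ->
  0 <= (3 * INR k ^ 2 - INR q * INR k) / ((INR k - 1) * INR n)
       - INR k ^ 2 * INR q / ((INR k - 1) * (INR k - 1) * (INR n - INR k)).
Proof.
  intros Hq Hln.
  pose proof INR_k_ge_2 as HK.
  assert (Hl : INR k * INR k + INR k <= INR l)
    by (rewrite <- mult_INR, <- plus_INR; apply le_INR; lia).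
  assert (Hn : INR l <= INR n) by (apply le_INR; lia).
  apply le_INR in Hq; rewrite S_INR in Hq.
  pose proof (pos_INR q).
  set (K1 := INR k - 1); set (D := INR n - INR k).
  assert (HD : 0 < D) by (unfold D; nra).
  apply Rle_of_sub_eq_div with
    (a := (3 * INR k ^ 2 - INR q * INR k) * K1 * D - INR k ^ 2 * INR q * INR n)
    (d := K1 * K1 * INR n * D).
  - assert (Hqk : INR q * INR k <= INR k * INR k - INR k) by nra.
    assert (HnD : INR k * INR k * INR n <= (2 * INR k * INR k + INR k) * D) by (unfold D; nra).
    assert ((2 * INR k * INR k + INR k) * K1 * D <= (3 * INR k ^ 2 - INR q * INR k) * K1 * D).
    { apply Rmult_le_compat_r; [lra|]; apply Rmult_le_compat_r; [unfold K1; lra | nra]. }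
    assert (INR k ^ 2 * INR q * INR n <= INR k * INR k * K1 * INR n).
    { apply Rmult_le_compat_r; [nra|].
      replace (INR k ^ 2) with (INR k * INR k) by ring.
      apply Rmult_le_compat_l; [nra | unfold K1; lra]. }
    unfold K1 in *; nra.
  - unfold K1; repeat apply Rmult_lt_0_compat; nra.
  - unfold K1, D in *; field; repeat split; nra.
Qed.

Lemma bound_succ_le_potential l q :
  (q < k)%nat -> (k * k + k <= l <= n)%nat ->
  bound l (S q)
  <= potential l q l - potential l q n + ((INR l - INR k) / (INR n - INR k)) ^ k / INR n.
Proof.
  intros Hq Hln.
  pose proof (bound_slack_ge0 l q Hq Hln) as Hslack.
  pose proof INR_k_ge_2 as HK.
  assert (Hl : INR k * INR k + INR k <= INR l)
    by (rewrite <- mult_INR, <- plus_INR; apply le_INR; lia).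
  assert (Hn : INR l <= INR n) by (apply le_INR; lia).
  apply le_INR in Hq; rewrite S_INR in Hq.
  assert (Hq0 := pos_INR q).
  set (X := INR l - INR k); set (D := INR n - INR k); set (K1 := INR k - 1).
  set (u := (X / D) ^ k).
  set (c2 := (INR q * INR k + 3 * INR k ^ 2 * INR q) / INR n).
  set (c3 := INR k ^ 2 * INR q * D ^ (k - 1) / K1).
  assert (0 < X ^ (k - 1)) by (apply pow_lt; unfold X; nra).
  assert (0 < D ^ (k - 1)) by (apply pow_lt; unfold D; nra).
  assert (Hu : 0 <= u) by (apply pow_le, Rdiv_nonneg; unfold X, D; nra).
  set (slack_u := c2 / K1 + c3 / (K1 * D ^ k) + (INR q + 1) * INR k / (K1 * INR n) + 1 / INR n).
  set (slack := (3 * INR k ^ 2 - INR q * INR k) / (K1 * INR n) - INR k ^ 2 * INR q / (K1 * K1 * D)).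
  assert (E : potential l q l - potential l q n + u / INR n - bound l (S q) = u * slack_u + slack).
  { unfold potential, bound, slack_u, slack, u, c2, c3.
    replace (ln_taylor_sum (INR n) (S q)) with (INR q + 1).
    2:{ unfold ln_taylor_sum; rewrite Rdiv_diag, ln_1, taylor_exp_sum_at_0, S_INR by nra.
        reflexivity. }
    fold X D K1; rewrite !pow_div, !(pow_k_pred X), !(pow_k_pred D).
    rewrite S_INR; unfold X, D, K1 in *; field; repeat split; nra. }
  assert (HK1 : 0 < K1) by (unfold K1; lra).
  assert (Hn0 : 0 < INR n) by nra.
  assert (HD : 0 < D) by (unfold D; nra).
  assert (Hslack_u : 0 <= slack_u).
  { assert (0 < D ^ k) by (apply pow_lt; lra).
    assert (0 <= c2) by (apply Rdiv_nonneg; nra).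
    assert (0 <= c3) by (apply Rdiv_nonneg; [apply Rmult_le_pos; nra | lra]).
    unfold slack_u; repeat apply Rplus_le_le_0_compat; apply Rdiv_nonneg;
      try apply Rmult_lt_0_compat; nra. }
  change (0 <= slack) in Hslack.
  assert (0 <= u * slack_u) by (apply Rmult_le_pos; assumption).
  fold X D u; lra.
Qed.

Lemma bound_succ_le l q :
  (q < k)%nat -> (k * k + k <= l <= n)%nat ->
  bound l (S q)
  <= sum_seq l (n - l) (bound_term l q) + ((INR l - INR k) / (INR n - INR k)) ^ k / INR n.
Proof.
  intros Hq Hln.
  pose proof (sum_seq_telescope l (n - l) (potential l q)) as Htel.
  replace (l + (n - l))%nat with n in Htel by lia.
  assert (potential l q l - potential l q n <= sum_seq l (n - l) (bound_term l q)).
  { rewrite <- Htel; apply sum_seq_le; intros j Hj; apply potential_sub_succ_le; lia. }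
  pose proof (bound_succ_le_potential l q Hq Hln); lra.
Qed.

Lemma recursion_ge_bound l q c (f : nat -> R) :
  0 <= c -> (q < k)%nat -> (k * k + k <= l <= n)%nat -> f (S n) = 0 ->
  (forall j, (l < j <= n)%nat -> f j >= bound j q * c) ->
  sum_ft l n (fun j => ((INR l - INR k) / (INR j - INR k)) ^ k
                       * ((INR k - 1) / (INR j + 1) * f (S j) + c / INR n))
  >= bound l (S q) * c.
Proof.
  intros Hc Hq Hln Hfn Hf.
  pose proof INR_k_ge_2 as HK.
  assert (Hl : INR k * INR k + INR k <= INR l)
    by (rewrite <- mult_INR, <- plus_INR; apply le_INR; lia).
  set (term j := ((INR l - INR k) / (INR j - INR k)) ^ k
                 * ((INR k - 1) / (INR j + 1) * f (S j) + c / INR n)).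
  change (sum_seq l (S n - l) term >= bound l (S q) * c).
  replace (S n - l)%nat with (S (n - l)) by lia.
  rewrite sum_seq_succ_r; replace (l + (n - l))%nat with n by lia.
  assert (Hlast : term n = ((INR l - INR k) / (INR n - INR k)) ^ k / INR n * c).
  { unfold term; rewrite Hfn; unfold Rdiv; ring. }
  assert (Hterms : sum_seq l (n - l) (fun j => c * bound_term l q j) <= sum_seq l (n - l) term).
  { apply sum_seq_le; intros j Hj.
    assert (Hj' : INR l <= INR j) by (apply le_INR; lia).
    assert (0 <= ((INR l - INR k) / (INR j - INR k)) ^ k)
      by (apply pow_le, Rdiv_nonneg; nra).
    assert (0 <= (INR k - 1) / (INR j + 1)) by (apply Rdiv_nonneg; nra).
    pose proof (Hf (S j) ltac:(lia)) as Hfj.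
    unfold term, bound_term.
    replace (c * _) with (((INR l - INR k) / (INR j - INR k)) ^ k
                          * ((INR k - 1) / (INR j + 1) * (bound (S j) q * c) + c / INR n))
      by (unfold Rdiv; ring).
    apply Rmult_le_compat_l; [assumption|].
    apply Rplus_le_compat_r, Rmult_le_compat_l; [assumption | lra]. }
  rewrite sum_seq_scal in Hterms.
  pose proof (bound_succ_le l q Hq Hln) as Hbound.
  apply Rmult_le_compat_r with (r := c) in Hbound; [|exact Hc].
  lra.
Qed.

End Bound.

Theorem mainTheorem9 (k n : nat) (c : R) (b : nat -> nat -> R)
  (hk : (2 <= k)%nat) (hc : 0 <= c)
  (hbn : forall r, (r <= k)%nat -> b (S n) r = 0)
  (hb0 : forall l, (k < l <= S n)%nat -> b l 0%nat = 0)
  (hrec : forall l r, (k < l <= n)%nat -> (1 <= r <= k)%nat ->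
     b l r = sum_ft l n (fun j =>
        ((INR l - INR k) / (INR j - INR k)) ^ k *
        ((INR k - 1) / (INR j + 1) * b (S j) (r - 1)%nat + c / INR n))) :
  forall l r, (k * k + k <= l <= n)%nat -> (r <= k)%nat ->
    b l r >=
    (INR r * (INR l - INR k) / ((INR k - 1) * INR n)
     - 1 / (INR k - 1) * ((INR l - INR k) / (INR n - INR k)) ^ k *
       sum_lt r (fun r' => sum_ft 0 r' (fun i =>
          (INR k - 1) ^ i / INR (Factorial.fact i) * (ln (INR n / INR l)) ^ i))
     - 3 * INR k ^ 2 * INR r / ((INR k - 1) * INR n)) * c.
Proof.
  intros l r Hl Hr.
  enough (Hb : forall r l, (r <= k)%nat -> (k * k + k <= l <= n)%nat ->
                           b l r >= bound k n l r * c)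
    by exact (Hb r l Hr Hl).
  clear l r Hl Hr; induction r as [|q IH]; intros l Hr Hl.
  - rewrite hb0, bound_0 by nia; lra.
  - rewrite hrec by lia; replace (S q - 1)%nat with q by lia.
    apply (recursion_ge_bound k n hk l q c (fun m => b m q)); [exact hc | lia | lia | apply hbn; lia |].
    intros j Hj; apply IH; lia.
Qed.
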